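(* There exists a language $L$ recognised by a history-deterministic $1$-VASS under coverability acceptance (i.e. $L\in\mathrm{CH}_1$) that is not finitely sequential, i.e. there do not exist finitely many deterministic VASS (of any dimensions) $\mathcal{A}_1,\dots,\mathcal{A}_m$ with $L=L(\mathcal{A}_1)\cup\dots\cup L(\mathcal{A}_m)$, where each $L(\mathcal{A}_i)$ is the language of $\mathcal{A}_i$ under coverability acceptance.
   Context: Fix a finite alphabet $\Sigma$. A $k$-dimensional vector addition system with states ($k$-VASS) is a tuple $(Q,q_0,F,\delta)$ where $Q$ is a finite set of states, $q_0\in Q$ is initial, $F\subseteq Q$ is the set of accepting states, and $\delta\subseteq Q\times\Sigma\times\mathbb{Z}^k\times Q$ is a finite set of transitions (no $\varepsilon$-transitions). A run on a word $w=a_1\cdots a_n$ is a sequence of transitions $(p_{i-1},a_i,d_i,p_i)$ with $p_0=q_0$ such that the counter vectors $v_0=\vec 0$, $v_i=v_{i-1}+d_i$ all lie in $\mathbb{N}^k$. Under coverability acceptance the run is accepting if $p_n\in F$. The language is the set of words having an accepting run. A VASS is deterministic if for every state $q$ and letter $a$ there is at most one transition $(q,a,d,q')$. A VASS is history-deterministic if there is a resolver, i.e. a function $r$ mapping each finite sequence of transitions and each letter $a$ to a transition labelled $a$, such that for every word $w$ in the language, the sequence of transitions obtained by successively applying $r$ to the letters of $w$ is a run on $w$ (counters stay nonnegative) and is accepting. $\mathrm{CH}_1$ is the class of languages recognised by history-deterministic $1$-VASS under coverability acceptance. A language is finitely sequential if it is the union of the languages of finitely many deterministic VASS. *)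

From mathcomp Require Import all_boot all_algebra.
Set Implicit Arguments. Unset Strict Implicit. Unset Printing Implicit Defensive.
Import GRing.Theory Num.Theory.
Local Open Scope ring_scope.

(* No epsilon transitions. *)
Record VASS (Sigma : finType) (k : nat) := mkVASS {
  vstate : finType;
  vinit : vstate;
  vfinal : {set vstate};
  vdelta : seq (vstate * Sigma * {ffun 'I_k -> int} * vstate)
}.

Section VASSDefs.
Variables (Sigma : finType) (k : nat) (A : VASS Sigma k).

Definition trans := (vstate A * Sigma * {ffun 'I_k -> int} * vstate A)%type.

Definition tsrc (t : trans) : vstate A := t.1.1.1.
Definition tlet (t : trans) : Sigma := t.1.1.2.
Definition tupd (t : trans) : {ffun 'I_k -> int} := t.1.2.
Definition ttgt (t : trans) : vstate A := t.2.

Definition vadd (v d : {ffun 'I_k -> int}) : {ffun 'I_k -> int} :=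
  [ffun i => v i + d i].

Definition zero_vec : {ffun 'I_k -> int} := [ffun _ => 0].

Fixpoint is_run_from (p : vstate A) (v : {ffun 'I_k -> int})
    (ts : seq trans) (w : seq Sigma) : Prop :=
  match ts, w with
  | [::], [::] => True
  | t :: ts', a :: w' =>
      t \in vdelta A /\ tsrc t = p /\ tlet t = a /\
      (forall i, 0 <= vadd v (tupd t) i) /\
      is_run_from (ttgt t) (vadd v (tupd t)) ts' w'
  | _, _ => False
  end.

Definition last_state (ts : seq trans) : vstate A :=
  last (vinit A) (map ttgt ts).

Definition is_run (ts : seq trans) (w : seq Sigma) : Prop :=
  is_run_from (vinit A) zero_vec ts w.

(* Coverability acceptance: the run ends in an accepting state. *)
Definition is_accepting_run (ts : seq trans) (w : seq Sigma) : Prop :=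
  is_run ts w /\ last_state ts \in vfinal A.

Definition lang (w : seq Sigma) : Prop :=
  exists ts, is_accepting_run ts w.

Definition deterministic : Prop :=
  forall t1 t2, t1 \in vdelta A -> t2 \in vdelta A ->
    tsrc t1 = tsrc t2 -> tlet t1 = tlet t2 -> t1 = t2.

Definition resolver := seq trans -> Sigma -> trans.

Definition is_resolver (r : resolver) : Prop :=
  forall h a, r h a \in vdelta A /\ tlet (r h a) = a.

Fixpoint resolve_aux (r : resolver) (h : seq trans) (w : seq Sigma) :
    seq trans :=
  match w with
  | [::] => [::]
  | a :: w' => let t := r h a in t :: resolve_aux r (rcons h t) w'
  end.

Definition resolve (r : resolver) (w : seq Sigma) : seq trans :=
  resolve_aux r [::] w.

Definition history_deterministic : Prop :=
  exists r : resolver, is_resolver r /\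
    forall w, lang w -> is_accepting_run (resolve r w) w.

End VASSDefs.

Definition in_CH1 (Sigma : finType) (L : seq Sigma -> Prop) : Prop :=
  exists A : VASS Sigma 1,
    history_deterministic A /\ forall w, L w <-> lang A w.

Definition finitely_sequential (Sigma : finType) (L : seq Sigma -> Prop)
    : Prop :=
  exists (m : nat) (dims : 'I_m -> nat) (As : forall i : 'I_m, VASS Sigma (dims i)),
    (forall i, deterministic (As i)) /\
    forall w, L w <-> exists i : 'I_m, lang (As i) w.

From mathcomp Require Import all_boot all_algebra zify.
Set Implicit Arguments. Unset Strict Implicit. Unset Printing Implicit Defensive.

(* The witness is the language of the 1-VASS [guess_zero]: letter [true]
   increments the counter, letter [false] either decrements it or guesses that
   it is zero and moves to the rejecting state, which only [true] leaves.
   Decrementing whenever possible is optimal (every run is dominated by the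
   greedy one), so the greedy strategy is a resolver.

   Suppose the language is the union of the languages of deterministic VASS
   A_1, ..., A_m with at most M states each, and let N = M! + M.  After a word
   y leaving the greedy counter at N, the word y false^(N+1-M!) is in the
   language but y false^(N+1) is not.  Along a block of equal letters the state
   sequence of a deterministic automaton is periodic after M steps, with a
   period dividing M!; so a component accepting y false^(N+1-M!) must block on
   y false^(N+1).  Appending false^(N+1) true^(N+1) brings the greedy counter
   back to N and blocks that component for good; after m rounds no component
   is left to accept the words of the language, which is absurd. *)

Lemma eventually_periodic_fact (T : finType) (f : nat -> T) (n M : nat) :
  (forall i j, i < n -> j < n -> f i = f j -> f i.+1 = f j.+1) ->
  #|T| <= M -> M + M`! <= n -> f (n - M`!) = f n.
Proof.
move=> f_det cardT le_n.
have [a [b [lt_ab fab]]] : exists a b : 'I_M.+1, a < b /\ f a = f b.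
  have /injectivePn[a [b neq_ab fab]] : ~~ injectiveb (fun i : 'I_M.+1 => f i).
    by apply/injectiveP => /leq_card; rewrite card_ord; lia.
  case: (ltngtP a b) => [lt_ab|lt_ba|/val_inj eq_ab]; first by exists a, b.
    by exists b, a.
  by rewrite eq_ab eqxx in neq_ab.
have b_le : b <= M by rewrite -ltnS.
pose P := b - a.
have shiftP j : a <= j -> j + P <= n -> f j = f (j + P).
  move=> a_le; rewrite -(subnKC a_le); elim: (j - a) => [|c IH] le.
    by rewrite addn0 fab /P; congr f; lia.
  rewrite !addnS (addSn _ P); apply: (f_det); [lia|lia|apply: IH; lia].
have shiftcP c i : a <= i -> i + c * P <= n -> f i = f (i + c * P).
  elim: c => [|c IH] a_le le; first by rewrite addn0.
  rewrite IH; [|lia|lia]; rewrite [LHS]shiftP; [|lia|lia].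
  by rewrite mulSnr addnA.
have P_dvd : P %| M`! by apply: dvdn_fact; lia.
have := shiftcP (M`! %/ P) (n - M`!); rewrite divnK // subnK; last lia.
by apply; lia.
Qed.

Section Runs.
Variables (Sigma : finType) (k : nat) (A : VASS Sigma k).

Definition has_run (w : seq Sigma) : Prop := exists ts, is_run (A:=A) ts w.

Definition run_state (p : vstate A) (ts : seq (trans A)) (i : nat) : vstate A :=
  last p (map (@ttgt _ _ A) (take i ts)).

Lemma size_run p v ts w : is_run_from (A:=A) p v ts w -> size ts = size w.
Proof.
by elim: ts p v w => [|t ts IH] p v [|x w] //= [_ [_ [_ [_ /IH ->]]]].
Qed.

Lemma run_take p v ts w i :
  is_run_from (A:=A) p v ts w -> is_run_from (A:=A) p v (take i ts) (take i w).
Proof.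
elim: ts p v w i => [|t ts IH] p v [|x w] [|i] //= [t_in [t_p [t_x [pos run]]]].
by do 4 split => //; apply: IH.
Qed.

Lemma has_run_prefix u v : has_run (u ++ v) -> has_run u.
Proof.
move=> [ts /(run_take (size u))]; rewrite take_size_cat // => run.
by exists (take (size u) ts).
Qed.

Lemma run_nth p v ts w i (t0 : trans A) (x0 : Sigma) :
  is_run_from (A:=A) p v ts w -> i < size w ->
  [/\ nth t0 ts i \in vdelta A, tsrc (nth t0 ts i) = run_state p ts i
    & tlet (nth t0 ts i) = nth x0 w i].
Proof.
elim: ts p v w i => [|t ts IH] p v [|x w] [|i] //= [t_in [t_p [t_x [_ run]]]] //.
by rewrite /run_state /=; exact: IH run.
Qed.

Lemma run_state_succ p ts i (t0 : trans A) :
  i < size ts -> run_state p ts i.+1 = ttgt (nth t0 ts i).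
Proof. by move=> lt_i; rewrite /run_state (take_nth t0 lt_i) map_rcons last_rcons. Qed.

Lemma run_state_size p ts : run_state p ts (size ts) = last p (map (@ttgt _ _ A) ts).
Proof. by rewrite /run_state take_size. Qed.

Hypothesis A_det : deterministic A.

Lemma det_run_unique p v ts ts' w :
  is_run_from (A:=A) p v ts w -> is_run_from (A:=A) p v ts' w -> ts = ts'.
Proof.
elim: ts ts' p v w => [|t ts IH] [|t' ts'] p v [|x w] //=.
move=> [t_in [<- [t_x [_ run]]]] [t'_in [t'_p [t'_x [_ run']]]].
have eq_t : t = t' by apply: A_det => //; congruence.
by subst t'; rewrite (IH _ _ _ _ run run').
Qed.

Lemma det_run_state_succ p v ts w i j (x0 : Sigma) :
  is_run_from (A:=A) p v ts w -> i < size w -> j < size w ->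
  run_state p ts i = run_state p ts j -> nth x0 w i = nth x0 w j ->
  run_state p ts i.+1 = run_state p ts j.+1.
Proof.
move=> run lt_i lt_j eq_st eq_x; pose t0 : trans A := (p, x0, v, p).
have [i_in i_src i_let] := run_nth t0 x0 run lt_i.
have [j_in j_src j_let] := run_nth t0 x0 run lt_j.
rewrite -(size_run run) in lt_i lt_j.
rewrite !(run_state_succ _ t0) //; congr ttgt; apply: A_det => //; congruence.
Qed.

Lemma det_lang_pump u x n M :
  #|vstate A| <= M -> M + M`! <= n -> has_run (u ++ nseq n x) ->
  lang A (u ++ nseq (n - M`!) x) -> lang A (u ++ nseq n x).
Proof.
move=> card_le le_n [ts run] [ts' [run' acc']]; exists ts; split => //.
have size_w : size (u ++ nseq n x) = size u + n by rewrite size_cat size_nseq.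
have x_at i : i < n -> nth x (u ++ nseq n x) (size u + i) = x.
  by move=> lt_i; rewrite nth_cat ltnNge leq_addr /= addKn nth_nseq lt_i.
have short_w : u ++ nseq (n - M`!) x = take (size u + (n - M`!)) (u ++ nseq n x).
  by rewrite take_cat ltnNge leq_addr /= addKn take_nseq // leq_subr.
have ts'_eq : ts' = take (size u + (n - M`!)) ts.
  by apply: det_run_unique run' _; rewrite short_w; apply: run_take.
have period : run_state (vinit A) ts (size u + (n - M`!)) =
              run_state (vinit A) ts (size u + n).
  apply: (eventually_periodic_fact (f := fun i => run_state _ ts (size u + i))) => //.
  move=> i j lt_i lt_j eq_st; rewrite !addnS.
  by apply: (det_run_state_succ (x0 := x) run); rewrite ?size_w ?ltn_add2l ?x_at.
rewrite /last_state -run_state_size (size_run run) size_w -period.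
by rewrite ts'_eq in acc'.
Qed.

End Runs.

Definition counter1 (z : int) : {ffun 'I_1 -> int} := [ffun _ => z].

Definition guess_zero : VASS bool 1 :=
  @mkVASS bool 1 bool true [set true]
    [:: (true, true, counter1 1, true); (true, false, counter1 (-1), true);
        (true, false, counter1 0, false); (false, true, counter1 0, true)].

(* The configuration (state, counter) of the run that decrements whenever it
   can; [None] once that run is blocked. *)
Definition gstep (o : option (bool * nat)) (x : bool) : option (bool * nat) :=
  match o with
  | Some (true, d) =>
      if x then Some (true, d.+1)
      else if d is d'.+1 then Some (true, d') else Some (false, 0)
  | Some (false, d) => if x then Some (true, d) else None
  | None => None
  end.
Arguments gstep : simpl never.

Definition greedy (w : seq bool) : option (bool * nat) :=
  foldl gstep (Some (true, 0)) w.

Lemma gstep_None (w : seq bool) : foldl gstep None w = None.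
Proof. by elim: w. Qed.

Lemma greedy_cat u v : greedy (u ++ v) = foldl gstep (greedy u) v.
Proof. exact: foldl_cat. Qed.

Lemma gstep_nseq_true n d :
  foldl gstep (Some (true, d)) (nseq n true) = Some (true, d + n).
Proof.
elim: n d => [|n IH] d; first by rewrite addn0.
by rewrite -addSnnS -IH.
Qed.

Lemma gstep_nseq_false n d : n <= d ->
  foldl gstep (Some (true, d)) (nseq n false) = Some (true, d - n).
Proof.
by elim: n d => [|n IH] [|d] //= le_nd; rewrite ?subn0 // IH // subSS.
Qed.

Lemma gstep_nseq_false_zero d :
  foldl gstep (Some (true, d)) (nseq d.+1 false) = Some (false, 0).
Proof. by elim: d => [|d IH]. Qed.

Lemma greedy_nseq_true n : greedy (nseq n true) = Some (true, n).
Proof. exact: gstep_nseq_true. Qed.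

(* [(p, c)] is the configuration of an arbitrary run and [Y] that of the greedy
   run; the second disjunct is a run that guessed zero where the greedy run
   decremented. *)
Definition dominated (p : bool) (c : int) (Y : bool * nat) : Prop :=
  (0 <= c)%R /\ (p = Y.1 /\ (c <= Y.2%:Z)%R
                 \/ p = false /\ Y.1 = true /\ (c <= Y.2.+1%:Z)%R).

Lemma dominated_step (t : trans guess_zero) (v : {ffun 'I_1 -> int}) Y :
  t \in vdelta guess_zero -> dominated (tsrc t) (v ord0) Y ->
  (0 <= vadd v (tupd t) ord0)%R ->
  exists2 Y', gstep (Some Y) (tlet t) = Some Y' &
              dominated (ttgt t) (vadd v (tupd t) ord0) Y'.
Proof.
rewrite ffunE; case: Y => [[] [|d]];
  rewrite !inE => /or4P [] /eqP -> /=; rewrite /dominated /= !ffunE /=;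
  move=> [c_ge0 [[p_eq c_le]|[p_eq [y_eq c_le]]]] pos //;
  try (eexists; first reflexivity); rewrite /=; lia.
Qed.

Lemma dominated_run (ts : seq (trans guess_zero)) (w : seq bool) (p : bool)
    (v : {ffun 'I_1 -> int}) (Y : bool * nat) :
  dominated p (v ord0) Y -> is_run_from (A:=guess_zero) p v ts w ->
  exists2 Y', foldl gstep (Some Y) w = Some Y' &
              exists c, dominated (last p (map (@ttgt _ _ guess_zero) ts)) c Y'.
Proof.
elim: ts w p v Y => [|t ts IH] [|x w] p v Y //.
  by exists Y => //; exists (v ord0).
move=> dom [t_in [t_p [t_x [pos run]]]]; rewrite -t_p in dom.
have [Y1 step_t dom1] := dominated_step t_in dom (pos ord0).
have [Y' fold_w dom'] := IH _ _ _ _ dom1 run.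
by exists Y'; first by rewrite -fold_w -step_t t_x.
Qed.

(* [None] only occurs outside the language, where any correctly labelled
   transition will do. *)
Definition greedy_trans (o : option (bool * nat)) (x : bool) : trans guess_zero :=
  match o, x with
  | Some (false, _), true => (false, true, counter1 0, true)
  | Some (true, 0), false => (true, false, counter1 0, false)
  | _, true => (true, true, counter1 1, true)
  | _, false => (true, false, counter1 (-1), true)
  end.

Lemma greedy_trans_resolves o x :
  greedy_trans o x \in vdelta guess_zero /\ tlet (greedy_trans o x) = x.
Proof. by case: o => [[[] [|d]]|]; case: x; rewrite !inE eqxx ?orbT. Qed.

Lemma greedy_trans_step Y x Y1 : gstep (Some Y) x = Some Y1 ->
  [/\ tsrc (greedy_trans (Some Y) x) = Y.1,
      vadd (counter1 Y.2%:Z) (tupd (greedy_trans (Some Y) x)) = counter1 Y1.2%:Z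
    & ttgt (greedy_trans (Some Y) x) = Y1.1].
Proof.
rewrite /gstep; case: Y => [[] [|d]]; case: x => //= -[<-];
  split => //; apply/ffunP => i; rewrite !ffunE /=; lia.
Qed.

Definition greedy_resolver : resolver guess_zero :=
  fun h x => greedy_trans (greedy (map (@tlet _ _ guess_zero) h)) x.

Lemma greedy_resolver_run (w : seq bool) (h : seq (trans guess_zero)) Y Y' :
  greedy (map (@tlet _ _ guess_zero) h) = Some Y -> foldl gstep (Some Y) w = Some Y' ->
  is_run_from (A:=guess_zero) Y.1 (counter1 Y.2%:Z)
    (resolve_aux greedy_resolver h w) w /\
  last Y.1 (map (@ttgt _ _ guess_zero) (resolve_aux greedy_resolver h w)) = Y'.1.
Proof.
elim: w h Y => [|x w IH] h Y greedy_h /=; first by move=> [->].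
case step_x: (gstep (Some Y) x) => [Y1|]; last by rewrite gstep_None.
move=> greedy_w.
have r_hx : greedy_resolver h x = greedy_trans (Some Y) x.
  by rewrite /greedy_resolver greedy_h.
have [t_in t_x] := greedy_trans_resolves (Some Y) x.
have [t_src t_upd t_tgt] := greedy_trans_step step_x.
have greedy_h1 :
    greedy (map (@tlet _ _ guess_zero) (rcons h (greedy_resolver h x))) = Some Y1.
  by rewrite map_rcons /greedy foldl_rcons -/(greedy _) greedy_h r_hx t_x.
have [run last_run] := IH _ _ greedy_h1 greedy_w.
rewrite r_hx t_tgt in run last_run *; rewrite t_upd in run *.
split; last exact: last_run.
by do 3 split=> //; split=> // i; rewrite ffunE.
Qed.

Lemma greedy_accepting_run w d :
  greedy w = Some (true, d) -> is_accepting_run (resolve greedy_resolver w) w.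
Proof.
move=> greedy_w; have [run last_run] := @greedy_resolver_run w [::] _ _ erefl greedy_w.
by split; last by rewrite /last_state last_run inE.
Qed.

Lemma lang_guess_zero w : lang guess_zero w <-> exists d, greedy w = Some (true, d).
Proof.
split=> [[ts [run acc]]|[d /greedy_accepting_run acc]]; last first.
  by exists (resolve greedy_resolver w).
have dom0 : dominated true (zero_vec 1 ord0) (true, 0).
  by rewrite /dominated /zero_vec ffunE /=; lia.
have [[[] d] greedy_w [c dom]] := dominated_run dom0 run; first by exists d.
by move: acc dom; rewrite /last_state inE => /eqP -> [_ [[]|[]]].
Qed.

Lemma guess_zero_history_deterministic : history_deterministic guess_zero.
Proof.
exists greedy_resolver; split=> [h x|w /lang_guess_zero [d /greedy_accepting_run //]].
exact: greedy_trans_resolves.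
Qed.

Section NotFinitelySequential.
Variables (m : nat) (dims : 'I_m -> nat) (As : forall i : 'I_m, VASS bool (dims i)).
Hypothesis As_det : forall i, deterministic (As i).
Hypothesis As_lang : forall w, lang guess_zero w <-> exists i, lang (As i) w.

Let M := \max_(i < m) #|vstate (As i)|.
Let N := M`! + M.

Lemma blocked_after_accepting i y :
  greedy y = Some (true, N) -> lang (As i) (y ++ nseq (N.+1 - M`!) false) ->
  ~ has_run (As i) (y ++ nseq N.+1 false).
Proof.
move=> greedy_y acc run.
have card_le : #|vstate (As i)| <= M by exact: (leq_bigmax i).
have /lang_guess_zero[d] : lang guess_zero (y ++ nseq N.+1 false).
  by apply/As_lang; exists i; apply: det_lang_pump acc => //; rewrite /N; lia.
by rewrite greedy_cat greedy_y gstep_nseq_false_zero.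
Qed.

Lemma some_alive_blocked (S : {set 'I_m}) y :
  greedy y = Some (true, N) -> (forall i, has_run (As i) y -> i \in S) ->
  exists2 i, i \in S & ~ has_run (As i) (y ++ nseq N.+1 false).
Proof.
move=> greedy_y alive_S.
have : lang guess_zero (y ++ nseq (N.+1 - M`!) false).
  apply/lang_guess_zero; rewrite greedy_cat greedy_y gstep_nseq_false; first by eexists.
  by have := fact_gt0 M; rewrite /N; lia.
move=> /As_lang[i acc]; exists i; last exact: blocked_after_accepting acc.
have [ts [run _]] := acc.
by apply/alive_S/(has_run_prefix (v := nseq (N.+1 - M`!) false)); exists ts.
Qed.

Lemma alive_set_large n (S : {set 'I_m}) y :
  greedy y = Some (true, N) -> (forall i, has_run (As i) y -> i \in S) -> n < #|S|.
Proof.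
elim: n S y => [|n IH] S y greedy_y alive_S;
  have [i i_S blocked] := some_alive_blocked greedy_y alive_S.
  by apply/card_gt0P; exists i.
have := IH (S :\ i) (y ++ nseq N.+1 false ++ true :: nseq N true).
rewrite (cardsD1 i S) i_S add1n ltnS; apply.
  rewrite greedy_cat greedy_y foldl_cat gstep_nseq_false_zero.
  exact: (gstep_nseq_true N 0).
move=> j alive_j; rewrite in_setD1 alive_S ?andbT; last exact: has_run_prefix alive_j.
apply/eqP => eq_ji; apply: blocked; rewrite -eq_ji.
by apply: (has_run_prefix (v := true :: nseq N true)); rewrite -catA.
Qed.

End NotFinitelySequential.

Lemma guess_zero_in_CH1 : in_CH1 (lang guess_zero).
Proof. by exists guess_zero; split; [exact: guess_zero_history_deterministic|]. Qed.

Lemma guess_zero_not_finitely_sequential : ~ finitely_sequential (lang guess_zero).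
Proof.
move=> [m [dims [As [As_det As_lang]]]].
have := alive_set_large As_det As_lang m (greedy_nseq_true _) (fun i _ => in_setT i).
by rewrite cardsT card_ord ltnn.
Qed.

Theorem mainTheorem7 :
  exists (Sigma : finType) (L : seq Sigma -> Prop),
    in_CH1 L /\ ~ finitely_sequential L.
Proof.
exists bool, (lang guess_zero).
split; [exact: guess_zero_in_CH1 | exact: guess_zero_not_finitely_sequential].
Qed.
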